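(* Let $(G,M,I)$ be a finite total formal context and let $\mathcal S$ be its Dowker sheaf on $D(G,M,I)$. Then the zeroth cellular sheaf cohomology of $\mathcal S$ decomposes as $$H^0(\mathcal S)\cong\bigoplus_{\sigma\in D(G,M,I)}\operatorname{span}\widehat{M_\sigma},$$ so in particular $\dim H^0(\mathcal S)=|M|$, and $H^k(\mathcal S)=0$ for all $k>0$.
   Context: A formal context is a triple $(G,M,I)$ with $I\subseteq G\times M$; write $gIm$ for $(g,m)\in I$; for $A\subseteq G$, $A'=\{m: gIm\ \forall g\in A\}$, for $B\subseteq M$, $B'=\{g: gIm\ \forall m\in B\}$, $m'=\{m\}'$. It is total if $g'\ne\emptyset$ for all $g\in G$ and $m'\neq\emptyset$ for all $m\in M$. The Dowker complex $D(G,M,I)$ is the abstract simplicial complex on $G$ whose simplices are the nonempty $\sigma\subseteq G$ with $\sigma'\ne\emptyset$. For a simplex $\sigma$, $\widehat{M_\sigma}=\{m\in M: gIm \text{ iff } g\in\sigma\}=\{m: m'=\sigma\}$. The Dowker sheaf $\mathcal S$ assigns to each simplex $\sigma$ the real vector space $\mathcal S(\sigma)$ with basis $\sigma'$, and for $\sigma\subseteq\tau$ the restriction $\mathcal S(\sigma\subseteq\tau):\mathcal S(\sigma)\to\mathcal S(\tau)$ is the projection sending a basis element $m$ to $m$ if $m\in\tau'$ and to $0$ otherwise. Fix a linear order on $G$; for a $k$-simplex $\tau=\{g_0<\dots<g_k\}$ let $\tau_i=\tau\setminus\{g_i\}$. Cellular sheaf cohomology is the cohomology of the cochain complex $C^k=\bigoplus_{\dim\sigma=k}\mathcal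 S(\sigma)$ with $(d^k\delta)(\tau)=\sum_{i=0}^{k+1}(-1)^i\,\mathcal S(\tau_i\subseteq\tau)(\delta(\tau_i))$ for $(k+1)$-simplices $\tau$. *)

From HB Require Import structures.
From mathcomp Require Import all_boot all_order all_algebra.
Set Implicit Arguments. Unset Strict Implicit. Unset Printing Implicit Defensive.
Import Order.TTheory GRing.Theory Num.Theory.
Local Open Scope ring_scope.

Section Dowker.
Variables (R : fieldType) (G M : finType) (I : G -> M -> bool).

Definition total_context : Prop :=
  (forall g : G, exists m : M, I g m) /\ (forall m : M, exists g : G, I g m).

Definition intentS (A : {set G}) : {set M} := [set m | [forall g in A, I g m]].
Definition extent (m : M) : {set G} := [set g | I g m].

Definition simplex (s : {set G}) : bool := (s != set0) && (intentS s != set0).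

Definition Mhat (s : {set G}) : {set M} := [set m | extent m == s].

(* Basis of C^k = (+)_{dim s = k} S(s): pairs (s, m), s a k-simplex, m in s'. *)
Definition cell := ({set G} * M)%type.
Definition cidx (k : nat) (p : cell) : bool :=
  [&& simplex p.1, #|p.1| == k.+1 & p.2 \in intentS p.1].

Notation cochains := {ffun cell -> R^o}.

Definition Cvs (k : nat) : {vspace cochains} :=
  <<[seq ([ffun q : cell => ((q == p)%:R : R^o)] : cochains) | p <- enum (cidx k)]>>%VS.

Definition opos (t : {set G}) (g : G) : nat :=
  #|[set h in t | (enum_rank h < enum_rank g)%N]|.

(* coboundary d^k : C^k -> C^(k+1), with the restriction maps being projections *)
Definition dfun (k : nat) (f : cochains) : cochains :=
  [ffun p : cell => (if cidx k.+1 p then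
     \sum_(g in p.1) (-1) ^+ (opos p.1 g) * f (p.1 :\ g, p.2) else 0 : R^o)].

Lemma dfun_is_linear k : linear (dfun k).
Proof.
move=> a f h; apply/ffunP => p; rewrite !ffunE /=.
case: ifP => _ /=; last by rewrite -[RHS]/(a * 0 + 0 : R) mulr0 addr0.
rewrite scaler_sumr -big_split /=; apply: eq_bigr => g _.
rewrite !ffunE /= mulrDr; congr (_ + _).
by rewrite /GRing.scale /= mulrCA.
Qed.

Definition dlin (k : nat) : 'End(cochains) := linfun (dfun k).

(* cocycles, coboundaries, cohomology (as a complement of B^k in Z^k,
   i.e. a subspace canonically isomorphic to Z^k/B^k) *)
Definition Zk (k : nat) : {vspace cochains} := (Cvs k :&: lker (dlin k))%VS.
Definition Bk (k : nat) : {vspace cochains} :=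
  match k with 0 => 0%VS | k'.+1 => (dlin k' @: Cvs k')%VS end.
Definition Hk (k : nat) : {vspace cochains} := (Zk k :\: Bk k)%VS.

End Dowker.

(* The cochain complex splits along the attributes: a cell is a pair (s, m)
   with s a simplex of the full simplex on the extent m' of m, and the
   coboundary never changes m.  Each of these full simplices is a cone, with
   apex any object having attribute m, so adjoining the apex to simplices is a
   contracting homotopy: every positive-degree cocycle is a coboundary, and a
   0-cocycle is constant on the vertices of each m', i.e. one scalar per m. *)
From HB Require Import structures.
From mathcomp Require Import all_boot all_order all_algebra zify.
Import Order.TTheory GRing.Theory Num.Theory.
Local Open Scope ring_scope.
Set Implicit Arguments. Unset Strict Implicit. Unset Printing Implicit Defensive.

Section DowkerSheafCohomology.
Variables (R : fieldType) (G M : finType) (I : G -> M -> bool).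
Local Notation cochains := {ffun cell G M -> R^o}.

HB.instance Definition _ k := GRing.isLinear.Build R cochains cochains *:%R
  (dfun (R:=R) I k) (dfun_is_linear I k).

Lemma dlinE k f : dlin R I k f = dfun I k f.
Proof. by rewrite lfunE. Qed.

Lemma cidxE k (s : {set G}) (m : M) :
  cidx I k (s, m) = (#|s| == k.+1) && [forall g in s, I g m].
Proof.
rewrite /cidx /simplex /= /intentS inE.
case: (#|s| =P k.+1) => [s_card|]; last by rewrite !andbF.
have -> : s != set0 by rewrite -card_gt0 s_card.
case sm: [forall g in s, I g m]; rewrite ?andbF //= andbT.
by apply/set0Pn; exists m; rewrite inE.
Qed.

Lemma cidx_set1 (g : G) (m : M) : I g m -> cidx I 0 ([set g], m).
Proof.
by move=> gm; rewrite cidxE cards1 eqxx; apply/forall_inP => h /set1P ->.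
Qed.

Lemma cidx_face k (t : {set G}) (m : M) (g : G) :
  cidx I k.+1 (t, m) -> g \in t -> cidx I k (t :\ g, m).
Proof.
rewrite !cidxE (cardsD1 g t) => /andP[+ /forall_inP tm] gt.
by rewrite gt add1n eqSS => ->; apply/forall_inP => h /setD1P[_ /tm].
Qed.

Lemma cidx_cone k (t : {set G}) (m : M) (v : G) :
  cidx I k (t, m) -> v \notin t -> I v m -> cidx I k.+1 (v |: t, m).
Proof.
rewrite !cidxE cardsU1 => /andP[t_card /forall_inP tm] vt vm.
rewrite vt add1n eqSS t_card; apply/forall_inP => h /setU1P[-> // | /tm //].
Qed.

Definition drop_cells k (f : cochains) : cochains :=
  [ffun p => if cidx I k p then 0 else f p].

Lemma drop_cells_is_linear k : linear (drop_cells k).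
Proof.
move=> a f h; apply/ffunP => p; rewrite !ffunE.
by case: ifP => _ //; rewrite scaler0 addr0.
Qed.

HB.instance Definition _ k := GRing.isLinear.Build R cochains cochains *:%R
  (drop_cells k) (drop_cells_is_linear k).

Lemma memCvsP k (f : cochains) :
  reflect (forall p, ~~ cidx I k p -> f p = 0) (f \in Cvs R I k).
Proof.
apply: (iffP idP) => [fC p kp | f_supp].
  have : (Cvs R I k <= lker (linfun (drop_cells k)))%VS.
    apply/span_subvP => u /mapP[q]; rewrite mem_enum => kq ->.
    rewrite memv_ker lfunE; apply/eqP/ffunP => p'; rewrite !ffunE.
    case: ifP => // kp'; case: eqP => // eq_p'q.
    by rewrite -eq_p'q -topredE /= kp' in kq.
  move=> /subvP/(_ f fC); rewrite memv_ker lfunE => /eqP/ffunP/(_ p).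
  by rewrite !ffunE (negbTE kp).
pose e q : cochains := [ffun q' => ((q' == q)%:R : R^o)].
have -> : f = \sum_(q <- enum (cidx I k)) f q *: e q.
  apply/ffunP => p; rewrite sum_ffunE big_filter.
  under eq_bigr do rewrite !ffunE /GRing.scale /=.
  have [kp | kp] := boolP (cidx I k p).
    rewrite (bigD1 p) //= eqxx big1 ?addr0 ?mulr1 // => q /andP[_ /negbTE].
    by rewrite eq_sym => ->; rewrite mulr0.
  rewrite f_supp // big1 // => q kq; case: eqP => [pq | _]; last exact: mulr0.
  by move: kp; rewrite pq => /negP[].
rewrite big_seq; apply: memv_suml => q qk; apply/memvZ/memv_span.
exact: map_f.
Qed.

Lemma opos_setU1 (x y : G) (t : {set G}) : x \notin t ->
  opos (x |: t) y = (opos t y + (enum_rank x < enum_rank y))%N.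
Proof.
move=> xt; rewrite /opos; case: ltnP => [xy | yx].
  rewrite (_ : [set h in x |: t | _] = x |: [set h in t | (enum_rank h < enum_rank y)%N]).
    by rewrite cardsU1 inE (negbTE xt) addnC.
  by apply/setP => h; rewrite !inE; case: (h =P x) => [->|].
rewrite addn0; apply: eq_card => h; rewrite !inE.
by case: (h =P x) => [-> | //]; rewrite (negbTE xt) ltnNge yx.
Qed.

Lemma opos_set1 (x y : G) : opos [set x] y = (enum_rank x < enum_rank y)%N.
Proof.
rewrite -[[set x]]setU0 opos_setU1 ?inE // [opos _ _](_ : _ = 0%N) //.
by apply: eq_card0 => h; rewrite !inE.
Qed.

Lemma enum_rank_ltn_sum (x y : G) : x != y ->
  ((enum_rank x < enum_rank y) + (enum_rank y < enum_rank x) = 1)%N.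
Proof.
move=> xy; have : enum_rank x != enum_rank y by rewrite (inj_eq enum_rank_inj).
by rewrite neq_ltn; case: ltngtP.
Qed.

Lemma sign_opos_pair (a b : G) (F : G -> R) : a != b ->
  \sum_(g in [set a; b]) (-1) ^+ opos [set a; b] g * F g =
  (-1) ^+ opos [set a; b] a * (F a - F b).
Proof.
move=> ab; rewrite big_setU1 ?inE // big_set1 /= !opos_setU1 ?inE // !opos_set1.
rewrite !ltnn addn0 add0n; have := enum_rank_ltn_sum ab.
case: (enum_rank a < _)%N; case: (enum_rank b < _)%N => //= _.
  by rewrite expr0 expr1 mulN1r !mul1r.
by rewrite expr0 expr1 !mulN1r mul1r opprB addrC.
Qed.

(* Removing a vertex [g] of [v |: t] before or after adding the cone point
   [v] changes the combined position parity by exactly one. *)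
Lemma sign_opos_cone (v g : G) (t : {set G}) : v \notin t -> g \in t ->
  (-1) ^+ opos t g * (-1) ^+ opos (v |: t :\ g) v =
  - ((-1) ^+ opos (v |: t) v * (-1) ^+ opos (v |: t) g) :> R.
Proof.
move=> vt gt; have gv : g != v by apply: contraNneq vt => <-.
have -> : v |: t :\ g = (v |: t) :\ g.
  by apply/setP => h; rewrite !inE; case: (h =P v) => // ->; rewrite eq_sym gv.
have opos_v : opos (v |: t) v = (opos ((v |: t) :\ g) v + (enum_rank g < enum_rank v))%N.
  by rewrite -opos_setU1 ?setD1K // !inE ?eqxx // gt orbT.
have parity : (opos t g + opos ((v |: t) :\ g) v).+1 =
              (opos (v |: t) v + opos (v |: t) g)%N.
  rewrite opos_v opos_setU1 //; have := enum_rank_ltn_sum gv.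
  move: (opos t g) (opos _ v) (enum_rank g < _)%N (enum_rank v < _)%N; lia.
by rewrite -!exprD -parity exprS mulN1r opprK.
Qed.

Lemma dfun0_pair (f : cochains) (a b : G) (m : M) :
  a != b -> cidx I 1 ([set a; b], m) ->
  dfun I 0 f ([set a; b], m) =
  (-1) ^+ opos [set a; b] a * (f ([set b], m) - f ([set a], m)).
Proof.
move=> ab abm; rewrite ffunE abm sign_opos_pair // setU1K ?inE //.
congr (_ * (_ - f (_, m))); apply/setP => h; rewrite !inE.
by case: (h =P b) => [-> | _]; rewrite ?orbF // eq_sym (negbTE ab).
Qed.

Definition const_cochain (c : {ffun M -> R^o}) : cochains :=
  [ffun p => if cidx I 0 p then c p.2 else 0].

Lemma const_cochain_is_linear : linear const_cochain.
Proof.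
move=> a c c'; apply/ffunP => p; rewrite !ffunE.
by case: ifP => _ //; rewrite scaler0 addr0.
Qed.

HB.instance Definition _ := GRing.isLinear.Build R {ffun M -> R^o} cochains *:%R
  const_cochain const_cochain_is_linear.

Lemma const_cochain_cocycle c : const_cochain c \in Zk R I 0.
Proof.
rewrite memv_cap memv_ker dlinE; apply/andP; split.
  by apply/memCvsP => p kp; rewrite ffunE (negbTE kp).
apply/eqP/ffunP => -[t m]; rewrite [RHS]ffunE.
have [tm | tm] := boolP (cidx I 1 (t, m)); last by rewrite ffunE (negbTE tm).
move: (tm); rewrite cidxE => /andP[/cards2P[a [b [ab t_ab]]] /forall_inP abm].
subst t; rewrite dfun0_pair // !ffunE !cidx_set1 ?subrr ?mulr0 //.
all: by apply: abm; rewrite !inE eqxx ?orbT.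
Qed.

Variable apex : M -> G.
Hypothesis apexP : forall m, I (apex m) m.

Lemma const_cochain_inj : injective const_cochain.
Proof.
move=> c c' /ffunP eq_cc'; apply/ffunP => m.
by have := eq_cc' ([set apex m], m); rewrite !ffunE cidx_set1.
Qed.

Lemma cocycle0_const f :
  f \in Zk R I 0 -> f = const_cochain [ffun m => f ([set apex m], m)].
Proof.
rewrite memv_cap memv_ker dlinE => /andP[/memCvsP f_supp /eqP df].
apply/ffunP => -[s m]; rewrite !ffunE.
have [sm | sm] := boolP (cidx I 0 (s, m)); last by rewrite f_supp.
move: (sm); rewrite cidxE => /andP[/cards1P[g ->{s sm}] /forall_inP gm].
have {}gm : I g m by apply: gm; rewrite inE.
have [-> // | gv] := eqVneq g (apex m).
have := congr1 (fun h : cochains => h ([set g; apex m], m)) df.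
rewrite dfun0_pair // ?cidx_cone ?cidx_set1 ?inE // ffunE.
by move/eqP; rewrite mulf_eq0 signr_eq0 subr_eq0 => /eqP.
Qed.

Lemma Zk0E : Zk R I 0 = (linfun const_cochain @: fullv)%VS.
Proof.
apply/vspaceP => f; apply/idP/memv_imgP => [/cocycle0_const -> | [c _ ->]].
  by exists [ffun m => f ([set apex m], m)]; rewrite ?memvf ?lfunE.
by rewrite lfunE const_cochain_cocycle.
Qed.

Lemma dim_Zk0 : \dim (Zk R I 0) = #|M|.
Proof.
have /eqP ker0 : lker (linfun const_cochain) == 0%VS.
  by apply/lker0P => c c'; rewrite !lfunE => /const_cochain_inj.
by rewrite Zk0E limg_dim_eq ?ker0 ?capv0 // dimvf /dim /= muln1.
Qed.

Definition cone k (f : cochains) : cochains :=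
  [ffun p => if cidx I k p && (apex p.2 \notin p.1) then
     (-1) ^+ opos (apex p.2 |: p.1) (apex p.2) * f (apex p.2 |: p.1, p.2) else 0].

Lemma cone_Cvs k f : cone k f \in Cvs R I k.
Proof. by apply/memCvsP => p kp; rewrite ffunE (negbTE kp). Qed.

Lemma dfun_cone k f :
  f \in Cvs R I k.+1 -> dfun I k.+1 f = 0 -> dfun I k (cone k f) = f.
Proof.
move=> /memCvsP f_supp df; apply/ffunP => -[t m]; rewrite ffunE.
have [tm | tm] := boolP (cidx I k.+1 (t, m)); last by rewrite f_supp.
rewrite [(t, m).1]/= (eq_bigr (fun g => (-1) ^+ opos t g *
    (if apex m \in t :\ g then 0 else
     (-1) ^+ opos (apex m |: t :\ g) (apex m) * f (apex m |: t :\ g, m))));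
  last by move=> g gt; rewrite ffunE cidx_face //=; case: (_ \in _).
have [vt | vt] := boolP (apex m \in t).
  rewrite (bigD1 (apex m)) //= big1 ?addr0; last first.
    by move=> g /andP[gt gv]; rewrite !inE eq_sym gv vt mulr0.
  by rewrite setD1K // !inE eqxx /= mulrA -expr2 sqrr_sign mul1r.
set a := opos (apex m |: t) (apex m).
have cocycle : (-1) ^+ a * f (t, m) +
    \sum_(g in t) (-1) ^+ opos (apex m |: t) g * f ((apex m |: t) :\ g, m) = 0.
  have := congr1 (fun h : cochains => h (apex m |: t, m)) df.
  by rewrite !ffunE cidx_cone //= big_setU1 //= setU1K.
rewrite (eq_bigr (fun g => - (-1) ^+ a *
    ((-1) ^+ opos (apex m |: t) g * f ((apex m |: t) :\ g, m)))); last first.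
  move=> g gt; rewrite !inE (negbTE vt) andbF mulrA sign_opos_cone // mulNr mulrA.
  rewrite mulNr; congr (- (_ * f (_, m))); apply/setP => h; rewrite !inE.
  case: (h =P apex m) => [-> | //]; rewrite andbT; apply/esym/eqP => vg.
  by rewrite vg gt in vt.
move/eqP: cocycle; rewrite addrC addr_eq0 => /eqP cocycle.
by rewrite -mulr_sumr cocycle mulrN mulNr opprK mulrA -expr2 sqrr_sign mul1r.
Qed.

Lemma Zk_sub_Bk k : (Zk R I k.+1 <= Bk R I k.+1)%VS.
Proof.
apply/subvP => f; rewrite memv_cap memv_ker dlinE => /andP[fC /eqP df].
by rewrite -(dfun_cone fC df) -dlinE memv_img ?cone_Cvs.
Qed.

End DowkerSheafCohomology.

Lemma Hk0E (R : fieldType) (G M : finType) (I : G -> M -> bool) :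
  Hk R I 0 = Zk R I 0.
Proof. by rewrite /Hk /= -[RHS](addv_diff_cap _ 0%VS) capv0 addv0. Qed.

(* Each attribute [m] lies in [Mhat (extent m)] and nowhere else. *)
Lemma sum_card_Mhat (G M : finType) (I : G -> M -> bool) :
  (forall m, exists g, I g m) ->
  (\sum_(s : {set G} | simplex I s) #|Mhat I s|)%N = #|M|.
Proof.
move=> cover; rewrite -sum1_card (partition_big (extent I) (simplex I)) /=.
  by apply: eq_bigr => s _; rewrite -sum1_card; apply: eq_bigl => m; rewrite inE.
move=> m _; apply/andP; split.
  by have [g gm] := cover m; apply/set0Pn; exists g; rewrite inE.
by apply/set0Pn; exists m; rewrite inE; apply/forall_inP => g; rewrite inE.
Qed.

Theorem mainTheorem4 (R : realFieldType) (G M : finType) (I : G -> M -> bool) :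
  total_context I ->
  [/\ \dim (Hk R I 0) = (\sum_(s : {set G} | simplex I s) #|Mhat I s|)%N,
      \dim (Hk R I 0) = #|M|
    & forall k : nat, (0 < k)%N -> Hk R I k = 0%VS].
Proof.
move=> [_ cover]; pose apex m := xchoose (cover m).
have apexP m : I (apex m) m := xchooseP (cover m).
have dim_H0 : \dim (Hk R I 0) = #|M| by rewrite Hk0E (dim_Zk0 R apexP).
split=> [|//|[// | k] _]; first by rewrite dim_H0 sum_card_Mhat.
by apply/eqP; rewrite diffv_eq0 (Zk_sub_Bk R apexP).
Qed.
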